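(* Let $(\widetilde M,\tilde g)$ be a two-sphere of revolution with poles $\tilde p,\tilde q$, normalized so that $d(\tilde p,\tilde q)=\pi$. Then the diameter $\mathrm{Diam}(\widetilde M):=\max\{d(\tilde x,\tilde y)\mid \tilde x,\tilde y\in\widetilde M\}$ equals $\pi=d(\tilde p,\tilde q)$.
   Context: A two-sphere of revolution is a Riemannian manifold homeomorphic to $S^2$ admitting a point $\tilde p$ whose cut locus is a single point $\tilde q$, such that on $\widetilde M\setminus\{\tilde p,\tilde q\}$ the metric in geodesic polar coordinates $(r,\theta)$ around $\tilde p$ is $dr^2+f(r)^2d\theta^2$ with $f$ smooth on $[0,d(\tilde p,\tilde q)]$, $f(0)=f(d(\tilde p,\tilde q))=0$. $d$ denotes Riemannian distance. *)

(* Concrete model of a two-sphere of revolution with d(p,q) = PI: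
   points are geodesic polar coordinates (r, theta), r in [0,PI],
   theta in R taken mod 2*PI, with all points r = 0 identified (pole p)
   and all points r = PI identified (pole q). *)
From Stdlib Require Import Reals Lra List.
From Coquelicot Require Import Coquelicot.
Open Scope R_scope.

(* Conditions on the warping function f making dr^2 + f(r)^2 dtheta^2 a
   smooth Riemannian metric on S^2 with poles at r = 0 and r = PI:
   f smooth (given as a smooth function on R, i.e. a smooth extension of
   f|[0,PI]), f(0) = f(PI) = 0, f > 0 on (0,PI), and the standard
   smoothness conditions at the poles: f'(0) = 1, f'(PI) = -1 and all
   even-order derivatives vanish at 0 and PI. *)
Definition revolution_profile (f : R -> R) : Prop :=
  (forall (n : nat) (x : R), ex_derive (Derive_n f n) x) /\
  f 0 = 0 /\ f PI = 0 /\
  (forall r, 0 < r < PI -> 0 < f r) /\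
  Derive f 0 = 1 /\ Derive f PI = -1 /\
  (forall k : nat, Derive_n f (2 * k) 0 = 0 /\ Derive_n f (2 * k) PI = 0).

Definition point : Type := (R * R)%type.

Definition valid_point (x : point) : Prop := 0 <= fst x <= PI.

Definition same_point (x y : point) : Prop :=
  fst x = fst y /\
  (fst x = 0 \/ fst x = PI \/ exists k : Z, snd y = snd x + 2 * PI * IZR k).

Record segment : Type := Seg { seg_r : R -> R ; seg_th : R -> R }.

Definition admissible_segment (s : segment) : Prop :=
  (forall t, 0 <= t <= 1 ->
     ex_derive (seg_r s) t /\ ex_derive (seg_th s) t /\
     continuous (Derive (seg_r s)) t /\ continuous (Derive (seg_th s)) t /\
     0 <= seg_r s t <= PI).

Definition seg_start (s : segment) : point := (seg_r s 0, seg_th s 0).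
Definition seg_end (s : segment) : point := (seg_r s 1, seg_th s 1).

Definition seg_length (f : R -> R) (s : segment) : R :=
  RInt (fun t => sqrt ((Derive (seg_r s) t) ^ 2
                       + (f (seg_r s t)) ^ 2 * (Derive (seg_th s) t) ^ 2)) 0 1.

(* a piecewise C^1 curve from x to y given by consecutive segments *)
Fixpoint chain (x : point) (l : list segment) (y : point) : Prop :=
  match l with
  | nil => same_point x y
  | s :: l' => admissible_segment s /\ same_point x (seg_start s) /\
               chain (seg_end s) l' y
  end.

Definition path_length (f : R -> R) (l : list segment) : R :=
  fold_right (fun s acc => seg_length f s + acc) 0 l.

Definition rdist (f : R -> R) (x y : point) : Rbar :=
  Glb_Rbar (fun L => exists l, chain x l y /\ L = path_length f l).

Definition pole_p : point := (0, 0).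
Definition pole_q : point := (PI, 0).

(** Every curve's length dominates the total change of its radial coordinate,
    because the integrand [sqrt (r'^2 + f(r)^2 θ'^2)] is at least [|r'|]; hence a
    curve from [p] (r = 0) to [q] (r = π) has length at least π, and the meridian
    realises π.  Conversely, two points at radii [r1], [r2] are joined by two
    meridian arcs through the nearer pole, of total length
    [min (r1 + r2) (2π - r1 - r2) <= π]. *)
From Stdlib Require Import Reals Lra FunctionalExtensionality.
From Coquelicot Require Import Coquelicot.
Open Scope R_scope.

Lemma continuous_pow2 (g : R -> R) x :
  continuous g x -> continuous (fun t => g t ^ 2) x.
Proof.
  intro Hg. apply continuous_ext with (fun t => mult (g t) (g t)).
  - intro t. unfold mult; simpl; ring.
  - apply (@continuous_mult _ R_AbsRing); exact Hg.
Qed.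

Lemma seg_length_integrand_continuous (f : R -> R) (s : segment) t :
  (forall x, continuous f x) -> admissible_segment s -> 0 <= t <= 1 ->
  continuous (fun t => sqrt ((Derive (seg_r s) t) ^ 2
                       + (f (seg_r s t)) ^ 2 * (Derive (seg_th s) t) ^ 2)) t.
Proof.
  intros Hf Hs Ht. destruct (Hs t Ht) as (Hr & _ & Hr' & Hth' & _).
  apply continuous_sqrt_comp.
  apply continuous_ext with (fun t => plus (Derive (seg_r s) t ^ 2)
     (mult (f (seg_r s t) ^ 2) (Derive (seg_th s) t ^ 2))); [reflexivity|].
  apply (@continuous_plus _ R_AbsRing R_NormedModule); [now apply continuous_pow2|].
  apply (@continuous_mult _ R_AbsRing); apply continuous_pow2; [|exact Hth'].
  apply (@continuous_comp R_UniformSpace R_UniformSpace R_UniformSpace); [|apply Hf].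
  now apply (@ex_derive_continuous R_AbsRing R_NormedModule).
Qed.

Lemma seg_length_ge_radial_change (f : R -> R) (s : segment) :
  (forall x, continuous f x) -> admissible_segment s ->
  seg_r s 1 - seg_r s 0 <= seg_length f s.
Proof.
  intros Hf Hs. unfold seg_length.
  assert (in01 : forall x, Rmin 0 1 <= x <= Rmax 0 1 -> 0 <= x <= 1).
  { intros x. rewrite Rmin_left, Rmax_right by lra. easy. }
  assert (Hftc : is_RInt (Derive (seg_r s)) 0 1 (minus (seg_r s 1) (seg_r s 0))).
  { apply (@is_RInt_derive R_CompleteNormedModule); intros x Hx;
      destruct (Hs x (in01 x Hx)) as (Hr & _ & Hr' & _).
    - now apply Derive_correct.
    - exact Hr'. }
  replace (seg_r s 1 - seg_r s 0) with (RInt (Derive (seg_r s)) 0 1)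
    by exact (is_RInt_unique _ _ _ _ Hftc).
  apply RInt_le; [lra | eexists; exact Hftc | |].
  - apply (@ex_RInt_continuous R_CompleteNormedModule). intros x Hx.
    now apply seg_length_integrand_continuous, in01.
  - intros x _.
    apply Rle_trans with (Rabs (Derive (seg_r s) x)); [apply Rle_abs|].
    rewrite <- sqrt_Rsqr_abs. apply sqrt_le_1_alt.
    pose proof (Rmult_le_pos _ _ (pow2_ge_0 (f (seg_r s x)))
                                 (pow2_ge_0 (Derive (seg_th s) x))).
    unfold Rsqr. simpl in *. lra.
Qed.

Lemma chain_radial_change_le (f : R -> R) (l : list segment) :
  (forall x, continuous f x) ->
  forall x y, chain x l y -> fst y - fst x <= path_length f l.
Proof.
  intro Hf. induction l as [|s l IH]; intros x y Hc; simpl in *.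
  - destruct Hc as [Exy _]. lra.
  - destruct Hc as (Hs & [Exs _] & Hc).
    pose proof (IH _ _ Hc). pose proof (seg_length_ge_radial_change f s Hf Hs).
    unfold seg_start, seg_end in *; simpl in *. lra.
Qed.

Definition meridian (a b th : R) : segment :=
  Seg (fun t => a + (b - a) * t) (fun _ => th).

Lemma Derive_meridian_r a b th : Derive (seg_r (meridian a b th)) = fun _ => b - a.
Proof.
  apply functional_extensionality; intro t.
  apply is_derive_unique. simpl. auto_derive; [exact I | ring].
Qed.

Lemma Derive_meridian_th a b th : Derive (seg_th (meridian a b th)) = fun _ => 0.
Proof. apply functional_extensionality; intro t. simpl. apply Derive_const. Qed.

Lemma meridian_admissible a b th :
  0 <= a <= PI -> 0 <= b <= PI -> admissible_segment (meridian a b th).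
Proof.
  intros Ha Hb t Ht. rewrite Derive_meridian_r, Derive_meridian_th. simpl.
  assert (Hmid : 0 <= a + (b - a) * t <= PI)
    by (destruct (Rle_dec a b); split; nra).
  repeat split; try (auto_derive; exact I); try apply continuous_const; lra.
Qed.

Lemma seg_length_meridian f a b th : seg_length f (meridian a b th) = Rabs (b - a).
Proof.
  unfold seg_length. rewrite Derive_meridian_r, Derive_meridian_th.
  rewrite (RInt_ext _ (fun _ => Rabs (b - a))).
  - rewrite RInt_const. unfold scal; simpl; unfold mult; simpl. ring.
  - intros x _. rewrite <- (sqrt_pow2 (Rabs (b - a))) by apply Rabs_pos.
    f_equal. rewrite pow2_abs. ring.
Qed.

Lemma same_point_refl (x : point) : same_point x x.
Proof. split; [reflexivity | right; right; exists 0%Z; simpl; ring]. Qed.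

Lemma same_point_pole r th th' : r = 0 \/ r = PI -> same_point (r, th) (r, th').
Proof. intros Hr. split; [reflexivity | simpl; tauto]. Qed.

Lemma chain_through_pole r1 th1 r2 th2 c :
  0 <= r1 <= PI -> 0 <= r2 <= PI -> c = 0 \/ c = PI ->
  chain (r1, th1) (meridian r1 c th1 :: meridian c r2 th2 :: nil) (r2, th2).
Proof.
  intros Hr1 Hr2 Hc. pose proof PI_RGT_0.
  assert (Hc' : 0 <= c <= PI) by lra.
  split; [apply meridian_admissible; lra | split; [| split;
    [apply meridian_admissible; lra | split]]].
  - replace (seg_start (meridian r1 c th1)) with (r1, th1)
      by (unfold seg_start; simpl; f_equal; ring).
    apply same_point_refl.
  - replace (seg_end (meridian r1 c th1)) with (c, th1)
      by (unfold seg_end; simpl; f_equal; ring).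
    replace (seg_start (meridian c r2 th2)) with (c, th2)
      by (unfold seg_start; simpl; f_equal; ring).
    now apply same_point_pole.
  - replace (seg_end (meridian c r2 th2)) with (r2, th2)
      by (unfold seg_end; simpl; f_equal; ring).
    apply same_point_refl.
Qed.

Lemma rdist_le_path_length f x y l :
  chain x l y -> Rbar_le (rdist f x y) (path_length f l).
Proof.
  intro Hc. apply (proj1 (Glb_Rbar_correct _)). now exists l.
Qed.

Lemma rdist_ge_radial_change f x y :
  (forall z, continuous f z) -> Rbar_le (fst y - fst x) (rdist f x y).
Proof.
  intro Hf. apply (proj2 (Glb_Rbar_correct _)).
  intros L [l [Hc ->]]. simpl. now apply (chain_radial_change_le f l Hf x y).
Qed.

Lemma rdist_le_through_pole f r1 th1 r2 th2 c :
  0 <= r1 <= PI -> 0 <= r2 <= PI -> c = 0 \/ c = PI ->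
  Rbar_le (rdist f (r1, th1) (r2, th2)) (Rabs (c - r1) + Rabs (r2 - c)).
Proof.
  intros Hr1 Hr2 Hc.
  apply Rbar_le_trans
    with (path_length f (meridian r1 c th1 :: meridian c r2 th2 :: nil)).
  - now apply rdist_le_path_length, chain_through_pole.
  - simpl. rewrite !seg_length_meridian. lra.
Qed.

Theorem lemma2p2 (f : R -> R) (Hf : revolution_profile f) :
  (forall x y : point, valid_point x -> valid_point y ->
     Rbar_le (rdist f x y) (Finite PI)) /\
  rdist f pole_p pole_q = Finite PI.
Proof.
  assert (Hcont : forall x, continuous f x).
  { intro x. apply (@ex_derive_continuous R_AbsRing R_NormedModule).
    exact (proj1 Hf O x). }
  pose proof PI_RGT_0.
  split.
  - intros [r1 th1] [r2 th2] Hx Hy. unfold valid_point in *; simpl in *.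
    destruct (Rle_dec (r1 + r2) PI).
    + apply Rbar_le_trans with (Rabs (0 - r1) + Rabs (r2 - 0)).
      * apply rdist_le_through_pole; lra.
      * simpl. rewrite Rabs_left1, Rabs_pos_eq; lra.
    + apply Rbar_le_trans with (Rabs (PI - r1) + Rabs (r2 - PI)).
      * apply rdist_le_through_pole; lra.
      * simpl. rewrite Rabs_pos_eq, Rabs_left1; lra.
  - apply Rbar_le_antisym.
    + apply Rbar_le_trans with (Rabs (PI - 0) + Rabs (PI - PI)).
      * apply rdist_le_through_pole; lra.
      * simpl. rewrite Rminus_diag, Rabs_R0, Rabs_pos_eq; lra.
    + replace (Finite PI) with (Finite (fst pole_q - fst pole_p))
        by (simpl; f_equal; ring).
      now apply rdist_ge_radial_change.
Qed.
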